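(* Assume (A1)–(A4) below. Then for any $s\in\mathcal S$ and policy $\pi$, the posterior variance of the value function $U_t^\pi(s)=\mathbb{V}_{\mathcal M\sim\Gamma_t}\big[V^{\pi,\mathcal M}(s)\big]$ satisfies $$U_t^\pi(s)=\mathbb{V}_{r\sim\Psi_t}\Big[\sum_a\pi(a\mid s)r(s,a)\Big]+\gamma^2u_t(s)+\gamma^2\sum_{a,s'}\pi(a\mid s)\bar p_t(s'\mid s,a)U_t^\pi(s'),$$ where $u_t(s)=\mathbb{V}_{a,s'\sim\pi,\bar p_t}\big[\bar V^\pi_t(s')\big]-\mathbb{E}_{\mathcal M\sim\Gamma_t}\Big[\mathbb{V}_{a,s'\sim\pi,p}\big[V^{\pi,\mathcal M}(s')\big]\Big]$.
   Context: Let $\mathcal S$ be a finite state space, $\mathcal A$ a finite action space and $\gamma\in[0,1)$ a discount factor. An MDP $\mathcal M$ here consists of a transition function $p$ (assigning to each $(s,a)$ a probability distribution $p(\cdot\mid s,a)$ on $\mathcal S$) and a bounded reward function $r:\mathcal S\times\mathcal A\to\mathbb R$; both are random: $\mathcal M\sim\Gamma_t$, with $p$ having marginal distribution $\Phi_t$ and $r$ having marginal distribution $\Psi_t$. A policy $\pi$ gives distributions $\pi(\cdot\mid s)$ on $\mathcal A$. The value function is $V^{\pi,\mathcal M}(s)=\mathbb E\big[\sum_{h\ge 0}\gamma^h r(s_h,a_h)\mid s_0=s\big]$ with $a_h\sim\pi(\cdot\mid s_h)$, $s_{h+1}\sim p(\cdot\mid s_h,a_h)$. Define $\bar p_t(s'\mid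 s,a)=\mathbb E_{p\sim\Phi_t}[p(s'\mid s,a)]$ and $\bar V^\pi_t(s)=\mathbb E_{\mathcal M\sim\Gamma_t}[V^{\pi,\mathcal M}(s)]$. For a transition function $q$ and function $f$ on $\mathcal S$, $\mathbb V_{a,s'\sim\pi,q}[f(s')]$ is the variance of $f(s')$ when $a\sim\pi(\cdot\mid s)$, $s'\sim q(\cdot\mid s,a)$. Assumptions: (A1) $p(s'\mid x,a)$ and $p(s'\mid y,a)$ are independent random variables if $x\neq y$; (A2) the MDP is a directed acyclic graph, i.e., states are not visited more than once in any given episode; (A3) $r(x,a)$ and $r(y,a)$ are independent random variables if $x\neq y$; (A4) the random variables $p(\cdot\mid s,a)$ and $r(s,a)$ are independent for any $(s,a)$.
   Formalization: Each p(·|s,a) is a sub-probability vector (missing mass ends the episode, value 0); (A1),(A3),(A4) become mutual independence of all blocks p(·|s,·) and r(s,·); (A2) becomes one rank on states, for all samples, rising along every p(s'|s,a) ≠ 0. Apart from conventions, each condition added here is assumed in the paper as well or is needed for the statement above to hold. *)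

From HB Require Import structures.
From mathcomp Require Import all_boot all_order all_algebra.
From mathcomp Require Import all_classical all_reals all_analysis.
Set Implicit Arguments. Unset Strict Implicit. Unset Printing Implicit Defensive.
Import Order.TTheory GRing.Theory Num.Theory.
Import numFieldNormedType.Exports.
Local Open Scope classical_set_scope.
Local Open Scope ring_scope.

Section rl.
Context {R : realType} {S A : finType} {Omega : Type}.

(* A (sampled) transition function: q s a s' = q(s' | s, a).
   A reward function: rw s a = r(s,a).  A policy: pi s a = pi(a | s). *)

Definition step_expect (pi : S -> A -> R) (q : S -> A -> S -> R)
  (f : S -> R) (s : S) : R :=
  \sum_(a : A) pi s a * \sum_(s' : S) q s a s' * f s'.

Definition pol_reward (pi : S -> A -> R) (rw : S -> A -> R) (s : S) : R :=
  \sum_(a : A) pi s a * rw s a.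

(* V^{pi,M}(s) = sum_h gamma^h E[r(s_h,a_h) | s_0 = s]; the expected reward at
   step h is the h-fold iterate of the one-step expectation operator applied
   to the expected immediate reward. *)
Definition value (gamma : R) (pi : S -> A -> R) (q : S -> A -> S -> R)
  (rw : S -> A -> R) (s : S) : R :=
  limn (series (fun h : nat =>
    gamma ^+ h * iter h (step_expect pi q) (pol_reward pi rw) s)).

Definition step_var (pi : S -> A -> R) (q : S -> A -> S -> R)
  (f : S -> R) (s : S) : R :=
  step_expect pi q (fun s' => f s' ^+ 2) s - (step_expect pi q f s) ^+ 2.

End rl.

Section indep.
Context {d : measure_display} {Omega : measurableType d} {R : realType}
  {S A : finType}.

Definition trans_event (p : Omega -> S -> A -> S -> R)
  (B : S -> A -> S -> set R) (s : S) : set Omega :=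
  [set w | forall a s', B s a s' (p w s a s')].

Definition rew_event (r : Omega -> S -> A -> R)
  (B : S -> A -> set R) (s : S) : set Omega :=
  [set w | forall a, B s a (r w s a)].

(* Mutual independence of the 2|S| random vectors
   p(.|s,.) (s in S) and r(s,.) (s in S): product rule on the generating
   pi-system of measurable rectangles (taking B = setT drops a block). *)
Definition indep_blocks (P : probability Omega R)
  (p : Omega -> S -> A -> S -> R) (r : Omega -> S -> A -> R) : Prop :=
  forall (Bp : S -> A -> S -> set R) (Br : S -> A -> set R),
    (forall s a s', measurable (Bp s a s')) ->
    (forall s a, measurable (Br s a)) ->
    P [set w | forall s, trans_event p Bp s w /\ rew_event r Br s w] =
    (\prod_(s : S) (P (trans_event p Bp s) * P (rew_event r Br s)))%E.

End indep.

From HB Require Import structures.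
From mathcomp Require Import all_boot all_order all_algebra.
From mathcomp Require Import all_classical all_reals all_analysis.
From mathcomp Require Import measurable_realfun.
From mathcomp Require Import ring lra.
Import Order.TTheory GRing.Theory Num.Theory.
Import numFieldNormedType.Exports.
Local Open Scope classical_set_scope.
Local Open Scope ring_scope.
Set Implicit Arguments. Unset Strict Implicit. Unset Printing Implicit Defensive.

(* Because the MDP is a DAG, V(s) is a finite sum and satisfies the Bellman
   equation V(s) = R(s) + gamma X(s) with R(s) = sum_a pi(a|s) r(s,a) and
   X(s) = sum_a pi(a|s) sum_s' p(s'|s,a) V(s'); moreover V(s') is a polynomial
   in the transitions and rewards of the states ranked strictly above s.
   Independence of the blocks therefore gives E[p(s'|s,a) V(s')^k] =
   pbar(s'|s,a) E[V(s')^k] for k = 1, 2 and E[R(s) p(s'|s,a) V(s')] =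
   E[R(s)] E[p(s'|s,a) V(s')], and expanding Var V(s) = E[V(s)^2] - E[V(s)]^2
   yields the recursion.
   Independence is only assumed on measurable rectangles.  It is transferred
   to E[f(Z) g(Z)] = E[f(Z)] E[g(Z)], for f and g Lipschitz functions of
   complementary coordinates of a bounded random vector Z, by approximating
   f(Z) and g(Z) uniformly with functions that are constant on the cells of a
   grid, whose expectations are finite sums of probabilities of rectangles. *)

Lemma norm_mulB_le (R : numDomainType) (x y x' y' B e : R) :
  `|x| <= B -> `|y'| <= B -> `|y - y'| <= e -> `|x - x'| <= e ->
  `|x * y - x' * y'| <= 2 * B * e.
Proof.
move=> hx hy' dy dx.
rewrite (_ : _ - _ = x * (y - y') + y' * (x - x')); last by ring.
rewrite (le_trans (ler_normD _ _))// !normrM (_ : 2 * B * e = B * e + B * e); last by ring.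
by rewrite lerD// ler_pM.
Qed.

Lemma eq0_norm_le_linear (R : realFieldType) (x c : R) :
  (forall e, 0 < e -> `|x| <= c * e) -> x = 0.
Proof.
move=> hx; apply/normr0_eq0/eqP; rewrite eq_le normr_ge0 andbT.
apply/ler_addgt0Pr => e e0; rewrite add0r.
have c1 : 0 < `|c| + 1 by rewrite ltr_pwDr// normr_ge0.
have := hx _ (divr_gt0 e0 c1); set h := e / _ => xh.
have eh : h * (`|c| + 1) = e by rewrite divfK ?gt_eqF.
have h0 : 0 < h by exact: divr_gt0.
have := ler_norm c; nra.
Qed.

Section bounded_expectation.
Context {R : realType} {d : measure_display} {T : measurableType d}
  (P : probability T R).

Definition bdd_meas (f : T -> R) :=
  measurable_fun setT f /\ exists M : R, forall w, `|f w| <= M.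

(* Junk value 0 when f is not integrable; only used for bounded measurable f. *)
Definition Ex (f : T -> R) : R := fine (\int[P]_w (f w)%:E)%E.

Lemma bdd_meas_integrable f : bdd_meas f -> P.-integrable setT (EFin \o f).
Proof.
move=> [mf [M hM]]; apply: measurable_bounded_integrable => //.
  by apply: (le_lt_trans (probability_le1 _ _)) => //; exact: ltry.
exists M; split; first by rewrite num_real.
by move=> M' MM' x _ /=; rewrite (le_trans (hM x))// ltW.
Qed.

Lemma integral_Ex f : bdd_meas f -> (\int[P]_w (f w)%:E = (Ex f)%:E)%E.
Proof.
by move=> /bdd_meas_integrable hf; rewrite /Ex fineK// integrable_fin_num.
Qed.

Lemma bdd_meas_cst c : bdd_meas (fun _ => c).
Proof. by split; [exact: measurable_cst | exists `|c|]. Qed.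

Lemma bdd_measD f g : bdd_meas f -> bdd_meas g -> bdd_meas (fun w => f w + g w).
Proof.
move=> [mf [M hM]] [mg [N hN]]; split; first exact: measurable_funD.
by exists (M + N) => w; rewrite (le_trans (ler_normD _ _))// lerD.
Qed.

Lemma bdd_measM f g : bdd_meas f -> bdd_meas g -> bdd_meas (fun w => f w * g w).
Proof.
move=> [mf [M hM]] [mg [N hN]]; split; first exact: measurable_funM.
by exists (M * N) => w; rewrite normrM ler_pM.
Qed.

Lemma bdd_measX f n : bdd_meas f -> bdd_meas (fun w => f w ^+ n).
Proof.
move=> hf; elim: n => [|n IH]; first exact: bdd_meas_cst.
by under eq_fun do rewrite exprS; exact: bdd_measM.
Qed.

Lemma bdd_measB f g : bdd_meas f -> bdd_meas g -> bdd_meas (fun w => f w - g w).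
Proof.
move=> hf hg; under eq_fun do rewrite -mulN1r.
by apply: bdd_measD => //; exact: bdd_measM (bdd_meas_cst _) hg.
Qed.

Lemma bdd_meas_sum (I : Type) (s : seq I) (Q : pred I) (F : I -> T -> R) :
  (forall i, bdd_meas (F i)) -> bdd_meas (fun w => \sum_(i <- s | Q i) F i w).
Proof.
move=> hF; elim: s => [|i s IH].
  by under eq_fun do rewrite big_nil; exact: bdd_meas_cst.
by under eq_fun do rewrite big_cons; case: (Q i) => //; exact: bdd_measD.
Qed.

Lemma bdd_meas_indic (E : set T) : measurable E -> bdd_meas (\1_E : T -> R).
Proof.
move=> mE; split; first exact: measurable_indic.
by exists 1 => w; rewrite /indic; case: (w \in E); rewrite ?normr1 ?normr0.
Qed.

Lemma eq_Ex f g : f =1 g -> Ex f = Ex g.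
Proof. by move=> /funext->. Qed.

Lemma ExD f g : bdd_meas f -> bdd_meas g -> Ex (fun w => f w + g w) = Ex f + Ex g.
Proof.
move=> hf hg; apply: EFin_inj; rewrite -integral_Ex; last exact: bdd_measD.
by rewrite EFinD -!integral_Ex// -integralD_EFin//; exact: bdd_meas_integrable.
Qed.

Lemma ExZ c f : bdd_meas f -> Ex (fun w => c * f w) = c * Ex f.
Proof.
move=> hf; apply: EFin_inj; rewrite -integral_Ex; last first.
  exact: bdd_measM (bdd_meas_cst c) hf.
by rewrite EFinM -integral_Ex// -integralZl//; exact: bdd_meas_integrable.
Qed.

Lemma Ex_cst c : Ex (fun _ => c) = c.
Proof.
apply: EFin_inj; rewrite -integral_Ex; last exact: bdd_meas_cst.
by rewrite integral_cst//= probability_setT mule1.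
Qed.

Lemma ExB f g : bdd_meas f -> bdd_meas g -> Ex (fun w => f w - g w) = Ex f - Ex g.
Proof.
move=> hf hg; under eq_Ex do rewrite -mulN1r.
by rewrite ExD ?ExZ ?mulN1r//; exact: bdd_measM (bdd_meas_cst _) hg.
Qed.

Lemma Ex_sum (I : Type) (s : seq I) (Q : pred I) (F : I -> T -> R) :
  (forall i, bdd_meas (F i)) ->
  Ex (fun w => \sum_(i <- s | Q i) F i w) = \sum_(i <- s | Q i) Ex (F i).
Proof.
move=> hF; elim: s => [|i s IH].
  by rewrite big_nil; under eq_Ex do rewrite big_nil; exact: Ex_cst.
rewrite big_cons -IH; under eq_Ex do rewrite big_cons.
by case: (Q i) => //; rewrite ExD//; exact: bdd_meas_sum.
Qed.

Lemma ler_Ex f g : bdd_meas f -> bdd_meas g -> (forall w, f w <= g w) -> Ex f <= Ex g.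
Proof.
move=> hf hg fg; rewrite -lee_fin -!integral_Ex//.
apply: le_integral => //; try exact: bdd_meas_integrable.
by move=> w _; rewrite lee_fin.
Qed.

Lemma Ex_norm_le f e : bdd_meas f -> (forall w, `|f w| <= e) -> `|Ex f| <= e.
Proof.
move=> hf he; have hfe w : - e <= f w <= e by rewrite -ler_norml.
rewrite ler_norml; apply/andP; split.
  rewrite -[X in X <= _](Ex_cst (- e)).
  by apply: ler_Ex => [||w]; [exact: bdd_meas_cst | | case/andP: (hfe w)].
rewrite -[X in _ <= X](Ex_cst e).
by apply: ler_Ex => [||w]; [| exact: bdd_meas_cst | case/andP: (hfe w)].
Qed.

Lemma Ex_indic (E : set T) : measurable E -> Ex (\1_E) = fine (P E).
Proof. by move=> mE; rewrite /Ex integral_indic// setIT. Qed.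

Lemma expectation_Ex f : bdd_meas f -> ('E_P[f] = (Ex f)%:E)%E.
Proof. by move=> hf; rewrite unlock integral_Ex. Qed.

Lemma variance_Ex f : bdd_meas f ->
  ('V_P[f] = (Ex (fun w => f w ^+ 2) - (Ex f) ^+ 2)%:E)%E.
Proof.
move=> hf; rewrite /variance covariance.unlock (expectation_Ex hf)/=.
have hf2 : bdd_meas (fun w => f w ^+ 2) by exact: bdd_measX.
have hfc : bdd_meas (f \- cst (Ex f)) by apply: bdd_measB => //; exact: bdd_meas_cst.
rewrite (expectation_Ex (bdd_measM hfc hfc)).
have hlin : bdd_meas (fun w => - (2 * Ex f) * f w).
  exact: bdd_measM (bdd_meas_cst _) hf.
congr (_%:E).
rewrite (@eq_Ex _ (fun w => f w ^+ 2 + (- (2 * Ex f) * f w + Ex f ^+ 2))); last first.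
  by move=> w /=; ring.
rewrite !ExD ?ExZ ?Ex_cst//; first ring.
all: exact: bdd_meas_cst || exact: bdd_measD hlin (bdd_meas_cst _).
Qed.

Lemma ExM_uniform_approx (F G : T -> R) (B c : R) :
  bdd_meas F -> bdd_meas G -> (forall w, `|G w| <= B) ->
  (forall h, 0 < h -> exists Fh Gh, [/\ bdd_meas Fh, bdd_meas Gh,
     Ex (fun w => Fh w * Gh w) = Ex Fh * Ex Gh &
     forall w, [/\ `|Fh w| <= B, `|F w - Fh w| <= c * h & `|G w - Gh w| <= c * h]]) ->
  Ex (fun w => F w * G w) = Ex F * Ex G.
Proof.
move=> bF bG hG happrox; apply/eqP; rewrite -subr_eq0; apply/eqP.
apply: (@eq0_norm_le_linear _ _ (4 * B * c)) => h h0.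
have [Fh [Gh [bFh bGh eFG near]]] := happrox h h0.
have hFh w : `|Fh w| <= B by case: (near w).
have dF w : `|F w - Fh w| <= c * h by case: (near w).
have dG w : `|G w - Gh w| <= c * h by case: (near w).
have e1 : `|Ex (fun w => F w * G w) - Ex (fun w => Fh w * Gh w)| <= 2 * B * c * h.
  rewrite -ExB; [|exact: bdd_measM|exact: bdd_measM].
  apply: Ex_norm_le => [|w]; first by apply: bdd_measB; exact: bdd_measM.
  by rewrite distrC -mulrA; apply: norm_mulB_le; rewrite // distrC.
have e2 : `|Ex Fh * Ex Gh - Ex F * Ex G| <= 2 * B * c * h.
  rewrite -mulrA; apply: norm_mulB_le; [exact: Ex_norm_le | exact: Ex_norm_le | |];
    by rewrite -ExB //; apply: Ex_norm_le => [|w]; [exact: bdd_measB | rewrite distrC].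
rewrite eFG in e1.
rewrite (_ : _ - _ = (Ex (fun w => F w * G w) - Ex Fh * Ex Gh)
  + (Ex Fh * Ex Gh - Ex F * Ex G)); last by ring.
by rewrite (le_trans (ler_normD _ _))//; lra.
Qed.

End bounded_expectation.

Section grid.
Context {R : realType}.
Variables (C h : R).

Definition grid_len : nat := Num.truncn (2 * C / h).
Definition grid_pt (j : nat) : R := - C + j%:R * h.
Definition grid_cell (j : nat) : set R := [set x | grid_pt j <= x < grid_pt j + h].
(* inord clamps the index, so grid_idx x is meaningful only for |x| <= C. *)
Definition grid_idx (x : R) : 'I_grid_len.+1 := inord (Num.truncn ((x + C) / h)).

Lemma measurable_grid_cell j : measurable (grid_cell j).
Proof.
rewrite (_ : grid_cell j = `[grid_pt j, grid_pt j + h[%classic).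
  exact: measurable_itv.
by apply/seteqP; split => x /=; rewrite in_itv.
Qed.

Hypothesis h0 : 0 < h.

Lemma grid_idxE x : `|x| <= C -> grid_idx x = Num.truncn ((x + C) / h) :> nat.
Proof.
move=> hx; rewrite /grid_idx inordK// ltnS /grid_len le_truncn//.
by rewrite ler_pM2r ?invr_gt0//; move: hx; rewrite ler_norml => /andP[_ ?]; lra.
Qed.

Lemma grid_cell_idx x : `|x| <= C -> grid_cell (grid_idx x) x.
Proof.
move=> hx; rewrite /grid_cell /grid_pt /= grid_idxE//.
have y0 : 0 <= (x + C) / h.
  by apply: divr_ge0; [move: hx; rewrite ler_norml => /andP[? _]; lra | exact: ltW].
have /andP[lo hi] := truncn_itv y0; set j := Num.truncn _ in lo hi *.
have ex : x = - C + (x + C) / h * h by rewrite divfK ?gt_eqF//; ring.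
apply/andP; split; first by rewrite [X in _ <= X]ex lerD2l ler_pM2r.
rewrite [X in X < _]ex -addrA ltrD2l.
by rewrite -[X in _ < _ + X]mul1r -mulrDl ltr_pM2r// natr1.
Qed.

Lemma grid_idx_cell x (j : 'I_grid_len.+1) : grid_cell j x -> grid_idx x = j.
Proof.
rewrite /grid_cell /grid_pt /= => /andP[lo hi]; apply: val_inj.
rewrite /grid_idx (@truncn_def _ _ j) ?inord_val//.
by rewrite ler_pdivlMr// ltr_pdivrMr// -natr1; apply/andP; split; lra.
Qed.

Lemma grid_pt_idx x : `|x| <= C ->
  `|x - grid_pt (grid_idx x)| <= h /\ `|grid_pt (grid_idx x)| <= C.
Proof.
move=> hx; have /andP[lo hi] := grid_cell_idx hx.
have jh : 0 <= (grid_idx x)%:R * h by apply: mulr_ge0 => //; exact: ltW.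
move: hx; rewrite !ler_norml /grid_pt in lo hi * => /andP[? ?].
by split; apply/andP; split; lra.
Qed.

End grid.

Section box_functions.
Context {R : realType} {d : measure_display} (T : measurableType d) {K : finType}.
Variable C : R.
Hypothesis C0 : 0 <= C.

Definition in_box (z : K -> R) := forall k, `|z k| <= C.

Definition depends_only (Q : pred K) (f : (K -> R) -> R) :=
  forall z z', (forall k, Q k -> z k = z' k) -> f z = f z'.

Definition box_lipschitz (c : R) (f : (K -> R) -> R) :=
  forall z z' e, 0 <= e -> in_box z -> in_box z' ->
    (forall k, `|z k - z' k| <= e) -> `|f z - f z'| <= c * e.

Definition preserves_measurable (f : (K -> R) -> R) :=
  forall Y : T -> K -> R, (forall k, measurable_fun setT (fun w => Y w k)) ->
    measurable_fun setT (fun w => f (Y w)).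

Definition admissible (Q : pred K) (f : (K -> R) -> R) :=
  [/\ depends_only Q f, exists c, box_lipschitz c f & preserves_measurable f].

Lemma in_box0 : in_box (fun _ => 0).
Proof. by move=> k; rewrite normr0. Qed.

Lemma box_lipschitz_ge0 c f : box_lipschitz c f -> 0 <= c.
Proof.
move=> fc; have : `|f (fun _ => 0) - f (fun _ => 0)| <= c * 1.
  by apply: fc => // [||k]; rewrite ?subrr ?normr0 //; exact: in_box0.
by rewrite subrr normr0 mulr1.
Qed.

Lemma box_lipschitz_bound c f : box_lipschitz c f ->
  forall z, in_box z -> `|f z| <= `|f (fun _ => 0)| + c * C.
Proof.
move=> fc z hz; have fz : `|f z - f (fun _ => 0)| <= c * C.
  by apply: fc => // [|k]; [exact: in_box0 | rewrite subr0; exact: hz].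
by rewrite -(subrK (f (fun _ => 0)) (f z)) (le_trans (ler_normD _ _))// addrC lerD2l.
Qed.

Lemma admissible_sub (Q Q' : pred K) f :
  (forall k, Q k -> Q' k) -> admissible Q f -> admissible Q' f.
Proof.
by move=> QQ' [fQ fc mf]; split=> // z z' zz'; apply: fQ => k /QQ'/zz'.
Qed.

Lemma admissible_cst Q (a : R) : admissible Q (fun _ => a).
Proof.
by split=> //; exists 0 => z z' e _ _ _ _; rewrite subrr normr0 mul0r.
Qed.

Lemma admissible_coord (Q : pred K) k : Q k -> admissible Q (fun z => z k).
Proof.
move=> Qk; split=> [z z' /(_ k Qk)//||Y /(_ k)//].
by exists 1 => z z' e _ _ _ /(_ k); rewrite mul1r.
Qed.

Lemma admissibleD Q f g :
  admissible Q f -> admissible Q g -> admissible Q (fun z => f z + g z).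
Proof.
move=> [fQ [cf fc] mf] [gQ [cg gc] mg]; split.
- by move=> z z' zz'; rewrite (fQ _ _ zz') (gQ _ _ zz').
- exists (cf + cg) => z z' e e0 hz hz' zz'.
  rewrite (_ : _ - _ = (f z - f z') + (g z - g z')); last by ring.
  by rewrite (le_trans (ler_normD _ _))// mulrDl lerD// ?fc ?gc.
- by move=> Y mY; apply: measurable_funD; [exact: mf | exact: mg].
Qed.

Lemma admissibleM Q f g :
  admissible Q f -> admissible Q g -> admissible Q (fun z => f z * g z).
Proof.
move=> [fQ [cf fc] mf] [gQ [cg gc] mg]; split.
- by move=> z z' zz'; rewrite (fQ _ _ zz') (gQ _ _ zz').
- pose Bf := `|f (fun _ => 0)| + cf * C; pose Bg := `|g (fun _ => 0)| + cg * C.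
  exists (Bf * cg + Bg * cf) => z z' e e0 hz hz' zz'.
  rewrite (_ : _ - _ = f z * (g z - g z') + g z' * (f z - f z')); last by ring.
  rewrite (le_trans (ler_normD _ _))// !normrM mulrDl -!mulrA.
  by rewrite lerD// ler_pM ?box_lipschitz_bound ?gc ?fc.
- by move=> Y mY; apply: measurable_funM; [exact: mf | exact: mg].
Qed.

Lemma admissibleX Q f n : admissible Q f -> admissible Q (fun z => f z ^+ n).
Proof.
move=> hf; elim: n => [|n IH]; first exact: admissible_cst.
by under eq_fun do rewrite exprS; exact: admissibleM.
Qed.

Lemma admissible_sum (I : Type) (s : seq I) Q (F : I -> (K -> R) -> R) :
  (forall i, admissible Q (F i)) -> admissible Q (fun z => \sum_(i <- s) F i z).
Proof.
move=> hF; elim: s => [|i s IH].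
  by under eq_fun do rewrite big_nil; exact: admissible_cst.
by under eq_fun do rewrite big_cons; exact: admissibleD.
Qed.

Lemma admissible_restrict (Q Q' : pred K) f : admissible Q' f ->
  admissible Q (fun z => f (fun k => if Q k then z k else 0)).
Proof.
move=> [_ [c fc] mf]; split.
- by move=> z z' zz'; congr f; apply: funext => k; case: (boolP (Q k)) => // /zz'.
- exists c => z z' e e0 hz hz' zz'; apply: fc => // k; case: (Q k) => //;
    by rewrite ?normr0 ?subrr ?normr0.
- move=> Y mY; apply: (mf (fun w k => if Q k then Y w k else 0)) => k.
  by case: (Q k) => //; exact: measurable_cst.
Qed.

End box_functions.

Section independent_product.
Context {R : realType} {d : measure_display} {T : measurableType d}
  (P : probability T R) {K : finType}.
Variables (Z : T -> K -> R) (C : R) (D : pred K).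
Hypotheses (C0 : 0 <= C) (Z_box : forall w, in_box C (Z w))
  (mZ : forall k, measurable_fun setT (fun w => Z w k)).

Definition coord_event (Q : pred K) (B : K -> set R) : set T :=
  [set w | forall k, Q k -> B k (Z w k)].

Lemma measurable_coord_event Q B :
  (forall k, measurable (B k)) -> measurable (coord_event Q B).
Proof.
move=> mB; rewrite (_ : coord_event Q B =
    \bigcap_(k in [set k | Q k]) ((fun w => Z w k) @^-1` B k)).
  by apply: fin_bigcap_measurable => // k _; rewrite -[_ @^-1` _]setTI; exact: mZ.
by apply/seteqP; split => w /= wB k /wB.
Qed.

Lemma bdd_meas_admissible Q f : admissible T C Q f -> bdd_meas (fun w => f (Z w)).
Proof.
move=> [_ [c fc] mf]; split; first exact: mf.
by exists (`|f (fun _ => 0)| + c * C) => w; exact: box_lipschitz_bound.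
Qed.

Hypothesis indep : forall B B' : K -> set R,
  (forall k, measurable (B k)) -> (forall k, measurable (B' k)) ->
  fine (P (coord_event D B `&` coord_event (predC D) B')) =
  fine (P (coord_event D B)) * fine (P (coord_event (predC D) B')).

Section grid_approx.
Variable h : R.
Hypothesis h0 : 0 < h.

Local Notation cells := {ffun K -> 'I_(grid_len C h).+1}.

(* The coordinates of σ outside Q are pinned to 0, so that each cell of the
   Q-coordinates occurs exactly once in the sum. *)
Definition grid_approx (Q : pred K) (f : (K -> R) -> R) (w : T) : R :=
  \sum_(σ : cells | [forall k, ~~ Q k ==> (σ k == ord0)])
    f (fun k => grid_pt C h (σ k)) *
    \1_(coord_event Q (fun k => grid_cell C h (σ k))) w.

Definition grid_round (Q : pred K) (z : K -> R) (k : K) : R :=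
  if Q k then grid_pt C h (grid_idx C h (z k)) else z k.

Lemma grid_round_box Q z : in_box C z -> in_box C (grid_round Q z).
Proof.
by move=> hz k; rewrite /grid_round; case: (Q k); [case: (grid_pt_idx h0 (hz k))|].
Qed.

Lemma grid_round_near Q z k : in_box C z -> `|z k - grid_round Q z k| <= h.
Proof.
move=> hz; rewrite /grid_round; case: (Q k); first by case: (grid_pt_idx h0 (hz k)).
by rewrite subrr normr0 ltW.
Qed.

Lemma grid_approxE Q f w : depends_only Q f ->
  grid_approx Q f w = f (grid_round Q (Z w)).
Proof.
move=> fQ; pose σw := [ffun k => if Q k then grid_idx C h (Z w k) else ord0].
have σwQ : [forall k, ~~ Q k ==> (σw k == ord0)].
  by apply/forallP => k; rewrite ffunE; case: (Q k).
rewrite /grid_approx (bigD1 σw σwQ) /= big1 ?addr0.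
  rewrite /indic mem_set ?mulr1.
    by apply: fQ => k Qk; rewrite ffunE /grid_round Qk.
  by move=> k Qk; rewrite ffunE Qk; exact (grid_cell_idx h0 (Z_box w k)).
move=> σ /andP[σQ σσw]; rewrite /indic memNset ?mulr0// => wσ.
move/negP: σσw; apply; apply/eqP/ffunP => k; rewrite ffunE.
case: (boolP (Q k)) => Qk; first by rewrite (grid_idx_cell h0 (wσ k Qk)).
by move/forallP: σQ => /(_ k); rewrite Qk => /eqP.
Qed.

Lemma measurable_grid_event Q (σ : K -> nat) :
  measurable (coord_event Q (fun k => grid_cell C h (σ k))).
Proof. by apply: measurable_coord_event => k; exact: measurable_grid_cell. Qed.

Lemma bdd_meas_grid_approx Q f : bdd_meas (grid_approx Q f).
Proof.
apply: bdd_meas_sum => σ; apply: bdd_measM; first exact: bdd_meas_cst.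
exact: bdd_meas_indic (measurable_grid_event _ _).
Qed.

Lemma Ex_grid_approx Q f : Ex P (grid_approx Q f) =
  \sum_(σ : cells | [forall k, ~~ Q k ==> (σ k == ord0)])
    f (fun k => grid_pt C h (σ k)) *
    fine (P (coord_event Q (fun k => grid_cell C h (σ k)))).
Proof.
have bE (σ : cells) : bdd_meas (\1_(coord_event Q (fun k => grid_cell C h (σ k)))).
  exact: bdd_meas_indic (measurable_grid_event _ _).
rewrite /grid_approx Ex_sum => [|σ]; last first.
  by apply: bdd_measM; [exact: bdd_meas_cst | exact: bE].
apply: eq_bigr => σ _; rewrite ExZ ?Ex_indic//; exact: measurable_grid_event.
Qed.

Lemma Ex_grid_approxM f g :
  Ex P (fun w => grid_approx D f w * grid_approx (predC D) g w) =
  Ex P (grid_approx D f) * Ex P (grid_approx (predC D) g).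
Proof.
rewrite !Ex_grid_approx big_distrl /=.
under eq_bigr do rewrite big_distrr /=.
pose E (σ τ : cells) := coord_event D (fun k => grid_cell C h (σ k)) `&`
  coord_event (predC D) (fun k => grid_cell C h (τ k)).
have mE σ τ : measurable (E σ τ) by apply: measurableI; exact: measurable_grid_event.
rewrite (@eq_Ex _ _ _ _ _ (fun w =>
   \sum_(σ : cells | [forall k, ~~ D k ==> (σ k == ord0)])
   \sum_(τ : cells | [forall k, ~~ predC D k ==> (τ k == ord0)])
    (f (fun k => grid_pt C h (σ k)) * g (fun k => grid_pt C h (τ k))) * \1_(E σ τ) w));
    last first.
  move=> w; rewrite big_distrl; apply: eq_bigr => σ _.
  by rewrite big_distrr; apply: eq_bigr => τ _; rewrite /E indicI /=; ring.
have bE (σ τ : cells) : bdd_meas (fun w => (f (fun k => grid_pt C h (σ k)) *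
    g (fun k => grid_pt C h (τ k))) * \1_(E σ τ) w).
  by apply: bdd_measM; [exact: bdd_meas_cst | exact: bdd_meas_indic (mE σ τ)].
rewrite Ex_sum => [|σ]; last exact: bdd_meas_sum.
apply: eq_bigr => σ _; rewrite Ex_sum//; apply: eq_bigr => τ _.
rewrite ExZ ?Ex_indic ?indep//; [ring | | | exact: bdd_meas_indic (mE σ τ)];
  by move=> k; exact: measurable_grid_cell.
Qed.

Lemma grid_approx_near Q c f w : depends_only Q f -> box_lipschitz C c f ->
  `|f (Z w) - grid_approx Q f w| <= c * h.
Proof.
move=> fQ fc; rewrite grid_approxE//; apply: fc; rewrite ?ltW//.
- exact: grid_round_box.
- by move=> k; exact: grid_round_near.
Qed.

Lemma grid_approx_bound Q f B w : depends_only Q f ->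
  (forall z, in_box C z -> `|f z| <= B) -> `|grid_approx Q f w| <= B.
Proof. by move=> fQ fB; rewrite grid_approxE//; apply/fB/grid_round_box. Qed.

End grid_approx.

Theorem Ex_admissibleM f g : admissible T C D f -> admissible T C (predC D) g ->
  Ex P (fun w => f (Z w) * g (Z w)) = Ex P (fun w => f (Z w)) * Ex P (fun w => g (Z w)).
Proof.
move=> hf hg; have [fD [cf fc] _] := hf; have [gD [cg gc] _] := hg.
pose Bf := `|f (fun _ => 0)| + cf * C; pose Bg := `|g (fun _ => 0)| + cg * C.
have [cf0 cg0] := (box_lipschitz_ge0 C0 fc, box_lipschitz_ge0 C0 gc).
have [Bf0 Bg0] : 0 <= Bf /\ 0 <= Bg by split; apply: addr_ge0 => //; exact: mulr_ge0.
apply: (@ExM_uniform_approx _ _ _ _ _ _ (Bf + Bg) (cf + cg)).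
- exact: bdd_meas_admissible hf.
- exact: bdd_meas_admissible hg.
- by move=> w; rewrite ler_wpDl// box_lipschitz_bound.
move=> h h0; exists (grid_approx h D f), (grid_approx h (predC D) g).
split; [exact: bdd_meas_grid_approx.. | exact: Ex_grid_approxM |].
move=> w; split.
- by apply: grid_approx_bound => // z hz; rewrite ler_wpDr// box_lipschitz_bound.
- by apply: le_trans (grid_approx_near h0 w fD fc) _; rewrite ler_pM2r// lerDl.
- by apply: le_trans (grid_approx_near h0 w gD gc) _; rewrite ler_pM2r// lerDr.
Qed.

End independent_product.

Section ranked_value.
Context {R : realType} {S A : finType}.
Variables (gamma : R) (pi : S -> A -> R) (rank : S -> nat).

Definition rank_increasing (q : S -> A -> S -> R) :=
  forall s a s', q s a s' != 0 -> (rank s < rank s')%N.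

Definition reward_iter q (rw : S -> A -> R) h :=
  iter h (step_expect pi q) (pol_reward pi rw).

Definition value_fin q rw t := \sum_(h < #|S|) gamma ^+ h * reward_iter q rw h t.

Definition nhigher (t : S) := #|[pred t' | (rank t < rank t')%N]|.

Lemma nhigher_lt t t' : (rank t < rank t')%N -> (nhigher t' < nhigher t)%N.
Proof.
move=> tt'; apply: proper_card; apply/fintype.properP; split.
  by apply/fintype.subsetP => x; rewrite !inE => /(ltn_trans tt').
by exists t'; rewrite !inE ?ltnn.
Qed.

Lemma nhigher_lt_card t : (nhigher t < #|S|)%N.
Proof.
apply: proper_card; apply/fintype.properP; split; first exact/fintype.subsetP.
by exists t; rewrite !inE ?ltnn.
Qed.

Lemma step_expect_sum (I : Type) (s : seq I) q (F : I -> S -> R) t :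
  step_expect pi q (fun t' => \sum_(i <- s) F i t') t =
  \sum_(i <- s) step_expect pi q (F i) t.
Proof.
rewrite /step_expect [RHS]exchange_big; apply: eq_bigr => a _ /=.
rewrite -big_distrr [X in _ = _ * X]exchange_big; congr (_ * _).
by apply: eq_bigr => t' _ /=; rewrite big_distrr.
Qed.

Lemma step_expectZ q c F t :
  step_expect pi q (fun t' => c * F t') t = c * step_expect pi q F t.
Proof.
rewrite /step_expect big_distrr; apply: eq_bigr => a _ /=.
rewrite [RHS]mulrCA [in RHS]big_distrr; congr (_ * _).
by apply: eq_bigr => t' _ /=; rewrite mulrCA.
Qed.

Lemma step_expectB q F G t : step_expect pi q (fun t' => F t' - G t') t =
  step_expect pi q F t - step_expect pi q G t.
Proof.
rewrite /step_expect -sumrB; apply: eq_bigr => a _.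
by rewrite -mulrBr -sumrB; congr (_ * _); apply: eq_bigr => t' _; rewrite mulrBr.
Qed.

Lemma step_expectE q F t :
  \sum_(a : A) \sum_(t' : S) pi t a * q t a t' * F t' = step_expect pi q F t.
Proof.
by apply: eq_bigr => a _; rewrite big_distrr; apply: eq_bigr => t' _ /=; rewrite mulrA.
Qed.

Section rank_increasing_transition.
Variables (q : S -> A -> S -> R) (rw : S -> A -> R).
Hypothesis q_rank : rank_increasing q.

Lemma reward_iter_eq0 h t : (nhigher t < h)%N -> reward_iter q rw h t = 0.
Proof.
elim: h t => [//|h IH] t th; rewrite /reward_iter iterS /step_expect big1 // => a _.
rewrite big1 ?mulr0 // => t' _.
have [->|qt'] := eqVneq (q t a t') 0; first by rewrite mul0r.
by rewrite [iter _ _ _ _]IH ?mulr0 // (leq_trans (nhigher_lt (q_rank qt'))).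
Qed.

Lemma value_finE t : value gamma pi q rw t = value_fin q rw t.
Proof.
rewrite /value; apply: lim_near_cst => //; exists #|S| => // n /= Sn.
rewrite /series /= (big_cat_nat (n:=#|S|)) //= big_mkord.
rewrite [X in _ + X]big1_seq ?addr0 // => h /andP[_].
rewrite mem_index_iota => /andP[Sh _].
by rewrite [iter _ _ _ _]reward_iter_eq0 ?mulr0 // (leq_trans (nhigher_lt_card t)).
Qed.

Lemma value_fin_bellman t :
  value_fin q rw t = pol_reward pi rw t + gamma * step_expect pi q (value_fin q rw) t.
Proof.
rewrite /value_fin step_expect_sum big_distrr /=.
under [in RHS]eq_bigr do rewrite step_expectZ mulrA -exprS.
rewrite -[pol_reward _ _ _]mul1r -(expr0 gamma).
rewrite -(big_ord_recl _ (fun h : 'I_#|S|.+1 => gamma ^+ h * reward_iter q rw h t)).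
by rewrite big_ord_recr /= reward_iter_eq0 ?mulr0 ?addr0 // nhigher_lt_card.
Qed.

Lemma eq_reward_iter q' rw' h t :
  (forall t0 a s', (rank t <= rank t0)%N -> q t0 a s' = q' t0 a s') ->
  (forall t0 a, (rank t <= rank t0)%N -> rw t0 a = rw' t0 a) ->
  reward_iter q rw h t = reward_iter q' rw' h t.
Proof.
elim: h t => [|h IH] t qq' rr'.
  by apply: eq_bigr => a _; rewrite rr'.
apply: eq_bigr => a _; congr (_ * _); apply: eq_bigr => t' _; rewrite -qq' //.
have [->|qt'] := eqVneq (q t a t') 0; first by rewrite !mul0r.
have tt' := ltnW (q_rank qt'); congr (_ * _); apply: IH => [t0 a0 s'|t0 a0] t0h.
  by apply: qq'; exact: leq_trans tt' t0h.
by apply: rr'; exact: leq_trans tt' t0h.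
Qed.

End rank_increasing_transition.
End ranked_value.

Section posterior_variance.
Context {R : realType} {S A : finType} {d : measure_display}
  {Omega : measurableType d} (P : probability Omega R).
Variables (gamma : R) (pi : S -> A -> R) (p : Omega -> S -> A -> S -> R)
  (r : Omega -> S -> A -> R) (rank : S -> nat) (M : R).
Hypotheses (p_ge0 : forall w s a s', 0 <= p w s a s')
  (p_sum_le1 : forall w s a, \sum_(s' : S) p w s a s' <= 1)
  (mp : forall s a s', measurable_fun setT (fun w => p w s a s'))
  (mr : forall s a, measurable_fun setT (fun w => r w s a))
  (r_bound : forall w s a, `|r w s a| <= M)
  (p_r_indep : indep_blocks P p r)
  (p_rank : forall w, rank_increasing rank (p w)).

Definition param := ((S * A * S) + (S * A))%type.

Definition theta (w : Omega) (k : param) : R :=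
  match k with inl (s, a, s') => p w s a s' | inr (s, a) => r w s a end.

Definition trans_of (z : param -> R) s a s' := z (inl (s, a, s')).
Definition reward_of (z : param -> R) s a := z (inr (s, a)).

Definition param_state (k : param) : S :=
  match k with inl (s, _, _) => s | inr (s, _) => s end.

Definition block_pred (Dp Dr : pred S) (k : param) : bool :=
  match k with inl (s, _, _) => Dp s | inr (s, _) => Dr s end.

Definition above (s : S) (k : param) : bool := (rank s < rank (param_state k))%N.

Definition param_bound : R := 1 + `|M|.

Local Notation adm := (@admissible _ _ Omega param param_bound).
Local Notation V w := (value gamma pi (p w) (r w)).

Lemma param_bound_ge0 : 0 <= param_bound.
Proof. by rewrite addr_ge0. Qed.

Lemma theta_box w : in_box param_bound (theta w).
Proof.
have p_le1 s a s' : p w s a s' <= 1.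
  apply: le_trans (p_sum_le1 w s a); rewrite (bigD1 s') //= lerDl.
  exact: sumr_ge0.
case=> [[[s a] s']|[s a]] /=.
  by rewrite ger0_norm ?(le_trans (p_le1 s a s')) ?lerDl.
by rewrite (le_trans (r_bound _ _ _)) // (le_trans (ler_norm M)) // lerDr.
Qed.

Lemma measurable_theta k : measurable_fun setT (fun w => theta w k).
Proof. by case: k => [[[s a] s']|[s a]] /=. Qed.

Lemma admissible_param_coord k : adm predT (fun z => z k).
Proof. exact: admissible_coord. Qed.

Lemma admissible_reward_iter h t :
  adm predT (fun z => reward_iter pi (trans_of z) (reward_of z) h t).
Proof.
elim: h t => [|h IH] t; rewrite /reward_iter /= ?/pol_reward ?/step_expect.
  apply: admissible_sum => a; apply: (admissibleM param_bound_ge0).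
    exact: admissible_cst.
  exact: admissible_param_coord.
apply: admissible_sum => a; apply: (admissibleM param_bound_ge0).
  exact: admissible_cst.
apply: admissible_sum => t'; apply: (admissibleM param_bound_ge0).
  exact: admissible_param_coord.
exact: IH.
Qed.

Lemma admissible_value_fin t :
  adm predT (fun z => value_fin gamma pi (trans_of z) (reward_of z) t).
Proof.
apply: admissible_sum => h; apply: (admissibleM param_bound_ge0).
  exact: admissible_cst.
exact: admissible_reward_iter.
Qed.

Lemma value_admissible_above s t : (rank s < rank t)%N ->
  exists f, adm (above s) f /\ forall w, V w t = f (theta w).
Proof.
move=> st; pose cut (z : param -> R) k := if above s k then z k else 0.
exists (fun z => value_fin gamma pi (trans_of (cut z)) (reward_of (cut z)) t); split.
  exact (admissible_restrict param_bound_ge0 (above s) (admissible_value_fin t)).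
move=> w; rewrite (value_finE _ _ _ (@p_rank w)); apply: eq_bigr => h _.
congr (_ * _); apply: (eq_reward_iter _ (@p_rank w)) => [t0 a s'|t0 a] t0h;
  by rewrite /trans_of /reward_of /cut /above /= (leq_trans st t0h).
Qed.

Lemma bdd_meas_theta_admissible Q f : adm Q f -> bdd_meas (fun w => f (theta w)).
Proof. exact: bdd_meas_admissible param_bound_ge0 theta_box measurable_theta Q f. Qed.

Lemma bdd_meas_value t : bdd_meas (fun w => V w t).
Proof.
have -> : (fun w => V w t) =
    (fun w => value_fin gamma pi (trans_of (theta w)) (reward_of (theta w)) t).
  by apply: funext => w; exact: (value_finE _ _ _ (@p_rank w)).
exact: bdd_meas_theta_admissible (admissible_value_fin t).
Qed.

Lemma bdd_meas_p s a t : bdd_meas (fun w => p w s a t).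
Proof. exact: bdd_meas_theta_admissible (admissible_param_coord (inl (s, a, t))). Qed.

Lemma bdd_meas_r s a : bdd_meas (fun w => r w s a).
Proof. exact: bdd_meas_theta_admissible (admissible_param_coord (inr (s, a))). Qed.


Definition param_event (E : param -> set R) : set Omega :=
  [set w | forall k, E k (theta w k)].

Definition trans_event_of (E : param -> set R) :=
  trans_event p (fun s a s' => E (inl (s, a, s'))).

Definition rew_event_of (E : param -> set R) :=
  rew_event r (fun s a => E (inr (s, a))).

Lemma trans_event_ofE E s :
  trans_event_of E s = coord_event theta (block_pred (pred1 s) pred0) E.
Proof.
apply/seteqP; split => w /= wE.
  by case=> [[[s0 a] s']|[s0 a]] //= /eqP ->; exact: wE.
by move=> a s'; exact: (wE (inl (s, a, s')) (eqxx s)).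
Qed.

Lemma rew_event_ofE E s :
  rew_event_of E s = coord_event theta (block_pred pred0 (pred1 s)) E.
Proof.
apply/seteqP; split => w /= wE; last by move=> a; exact: (wE (inr (s, a)) (eqxx s)).
by case=> [[[s0 a] s']|[s0 a]] //= /eqP ->; exact: wE.
Qed.

Lemma trans_event_of_if (Dp Dr : pred S) X Y s :
  trans_event_of (fun k => if block_pred Dp Dr k then X k else Y k) s =
  if Dp s then trans_event_of X s else trans_event_of Y s.
Proof. by rewrite /trans_event_of /trans_event /=; case: (Dp s). Qed.

Lemma rew_event_of_if (Dp Dr : pred S) X Y s :
  rew_event_of (fun k => if block_pred Dp Dr k then X k else Y k) s =
  if Dr s then rew_event_of X s else rew_event_of Y s.
Proof. by rewrite /rew_event_of /rew_event /=; case: (Dr s). Qed.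

Lemma trans_event_of_setT s : trans_event_of (fun _ => setT) s = setT.
Proof. exact/seteqP. Qed.

Lemma rew_event_of_setT s : rew_event_of (fun _ => setT) s = setT.
Proof. exact/seteqP. Qed.

Lemma param_event_prod E : (forall k, measurable (E k)) ->
  fine (P (param_event E)) =
  \prod_(s : S) (fine (P (trans_event_of E s)) * fine (P (rew_event_of E s))).
Proof.
move=> mE; have mtr s : measurable (trans_event_of E s).
  by rewrite trans_event_ofE; exact: measurable_coord_event measurable_theta _ _ mE.
have mrw s : measurable (rew_event_of E s).
  by rewrite rew_event_ofE; exact: measurable_coord_event measurable_theta _ _ mE.
have := p_r_indep (fun s a s' => mE (inl (s, a, s'))) (fun s a => mE (inr (s, a))).
rewrite (_ : [set w | _] = param_event E) => [->|]; last first.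
  apply/seteqP; split => w /= wE.
    by case=> [[[s a] s']|[s a]]; [exact: (wE s).1 | exact: (wE s).2].
  by move=> s; split => [a s'|a]; [exact: (wE (inl (s, a, s'))) | exact: (wE (inr _))].
rewrite (eq_bigr (fun s => (fine (P (trans_event_of E s)) *
  fine (P (rew_event_of E s)))%:E)) ?prodEFin// => s _.
by rewrite EFinM !fineK ?fin_num_measure.
Qed.

Lemma coord_event_param (Q : pred param) B B' :
  coord_event theta Q B `&` coord_event theta (predC Q) B' =
  param_event (fun k => if Q k then B k else B' k).
Proof.
apply/seteqP; split => w /=.
  by move=> [wB wB'] k; case: ifP => Qk; [exact: wB | apply: wB'; rewrite /= Qk].
by move=> wE; split => k Qk; move: (wE k); rewrite ?Qk //; move: Qk => /= /negbTE ->.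
Qed.

Lemma coord_event_setT (Q : pred param) : coord_event theta Q (fun _ => setT) = setT.
Proof. exact/seteqP. Qed.

Lemma block_pred_indep (Dp Dr : pred S) (B B' : param -> set R) :
  (forall k, measurable (B k)) -> (forall k, measurable (B' k)) ->
  fine (P (coord_event theta (block_pred Dp Dr) B `&`
           coord_event theta (predC (block_pred Dp Dr)) B')) =
  fine (P (coord_event theta (block_pred Dp Dr) B)) *
  fine (P (coord_event theta (predC (block_pred Dp Dr)) B')).
Proof.
set D := block_pred Dp Dr => mB mB'.
have eB : coord_event theta D B = param_event (fun k => if D k then B k else setT).
  by rewrite -coord_event_param coord_event_setT setIT.
have eB' : coord_event theta (predC D) B' =
    param_event (fun k => if D k then setT else B' k).
  by rewrite -coord_event_param coord_event_setT setTI.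
rewrite coord_event_param eB eB' !param_event_prod; try by move=> k; case: ifP.
rewrite -big_split; apply: eq_bigr => s _ /=.
rewrite !trans_event_of_if !rew_event_of_if.
by case: (Dp s); case: (Dr s);
  rewrite ?trans_event_of_setT ?rew_event_of_setT probability_setT /=; ring.
Qed.

Lemma Ex_block_indepM (Dp Dr : pred S) f g :
  adm (block_pred Dp Dr) f -> adm (predC (block_pred Dp Dr)) g ->
  Ex P (fun w => f (theta w) * g (theta w)) =
  Ex P (fun w => f (theta w)) * Ex P (fun w => g (theta w)).
Proof.
move=> hf hg; apply: (Ex_admissibleM param_bound_ge0 theta_box measurable_theta) hf hg.
exact: block_pred_indep.
Qed.

Lemma p_eq0 w s a t : (rank t <= rank s)%N -> p w s a t = 0.
Proof. by move=> ts; apply/eqP; apply: contraTT ts => /(@p_rank w); rewrite -ltnNge. Qed.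

Lemma above_param_state s k : above s k -> param_state k != s.
Proof. by rewrite /above; apply: contraTneq => ->; rewrite ltnn. Qed.

Lemma Ex_p_valueX s a t n :
  Ex P (fun w => p w s a t * V w t ^+ n) =
  Ex P (fun w => p w s a t) * Ex P (fun w => V w t ^+ n).
Proof.
have [st|ts] := ltnP (rank s) (rank t); last first.
  under eq_Ex do rewrite p_eq0 // mul0r.
  by under [Ex P (fun w => p w s a t)]eq_Ex do rewrite p_eq0 //; rewrite Ex_cst mul0r.
have [f [hf Vf]] := value_admissible_above st.
under eq_Ex do rewrite Vf; under [Ex P (fun w => V w t ^+ n)]eq_Ex do rewrite Vf.
apply: (@Ex_block_indepM (pred1 s) pred0 (fun z => z (inl (s, a, t)))
  (fun z => f z ^+ n)).
  by apply: admissible_coord => /=.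
apply: admissible_sub _ (admissibleX param_bound_ge0 n hf) => k /above_param_state.
by case: k => [[[? ?] ?]|[? ?]].
Qed.

Lemma Ex_p_value s a t :
  Ex P (fun w => p w s a t * V w t) =
  Ex P (fun w => p w s a t) * Ex P (fun w => V w t).
Proof. exact: Ex_p_valueX s a t 1. Qed.

Lemma Ex_reward_p_value s a t :
  Ex P (fun w => pol_reward pi (r w) s * (p w s a t * V w t)) =
  Ex P (fun w => pol_reward pi (r w) s) * Ex P (fun w => p w s a t * V w t).
Proof.
have [st|ts] := ltnP (rank s) (rank t); last first.
  under eq_Ex do rewrite p_eq0 // mul0r mulr0.
  under [Ex P (fun w => p w s a t * _)]eq_Ex do rewrite p_eq0 // mul0r.
  by rewrite Ex_cst mulr0.
have [f [hf Vf]] := value_admissible_above st.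
under eq_Ex do rewrite Vf; under [Ex P (fun w => p w s a t * _)]eq_Ex do rewrite Vf.
apply: (@Ex_block_indepM pred0 (pred1 s) (fun z => pol_reward pi (reward_of z) s)
  (fun z => z (inl (s, a, t)) * f z)).
  apply: admissible_sum => a'; apply: (admissibleM param_bound_ge0).
    exact: admissible_cst.
  by apply: admissible_coord => /=.
apply: (admissibleM param_bound_ge0); first by apply: admissible_coord.
apply: admissible_sub _ hf => k /above_param_state.
by case: k => [[[? ?] ?]|[? ?]].
Qed.

Definition p_mean s a t := Ex P (fun w => p w s a t).

Lemma bdd_meas_reward s : bdd_meas (fun w => pol_reward pi (r w) s).
Proof.
apply: bdd_meas_sum => a; apply: bdd_measM (bdd_meas_cst _) _; exact: bdd_meas_r.
Qed.

Lemma bdd_meas_step_expect (F : S -> Omega -> R) s : (forall t, bdd_meas (F t)) ->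
  bdd_meas (fun w => step_expect pi (p w) (fun t => F t w) s).
Proof.
move=> bF; apply: bdd_meas_sum => a; apply: bdd_measM (bdd_meas_cst _) _.
by apply: bdd_meas_sum => t; exact: bdd_measM (bdd_meas_p _ _ _) (bF t).
Qed.

Lemma Ex_step_expect (F : S -> Omega -> R) (G : A -> S -> R) s :
  (forall t, bdd_meas (F t)) ->
  (forall a t, Ex P (fun w => p w s a t * F t w) = G a t) ->
  Ex P (fun w => step_expect pi (p w) (fun t => F t w) s) =
  \sum_(a : A) pi s a * \sum_(t : S) G a t.
Proof.
move=> bF FG; have bpF a t : bdd_meas (fun w => p w s a t * F t w).
  exact: bdd_measM (bdd_meas_p _ _ _) (bF t).
rewrite Ex_sum => [|a]; last by apply: bdd_measM (bdd_meas_cst _) _; exact: bdd_meas_sum.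
apply: eq_bigr => a _; rewrite ExZ ?Ex_sum//; last exact: bdd_meas_sum.
by congr (_ * _); apply: eq_bigr => t _; exact: FG.
Qed.

Lemma Ex_next_valueX n s :
  Ex P (fun w => step_expect pi (p w) (fun t => V w t ^+ n) s) =
  step_expect pi p_mean (fun t => Ex P (fun w => V w t ^+ n)) s.
Proof.
apply: Ex_step_expect => [t|a t]; first exact: bdd_measX (bdd_meas_value t).
exact: Ex_p_valueX.
Qed.

Lemma Ex_next_value s :
  Ex P (fun w => step_expect pi (p w) (V w) s) =
  step_expect pi p_mean (fun t => Ex P (fun w => V w t)) s.
Proof. exact: Ex_next_valueX 1 s. Qed.

Lemma Ex_reward_next s :
  Ex P (fun w => pol_reward pi (r w) s * step_expect pi (p w) (V w) s) =
  Ex P (fun w => pol_reward pi (r w) s) * Ex P (fun w => step_expect pi (p w) (V w) s).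
Proof.
under eq_Ex do rewrite -step_expectZ.
rewrite Ex_next_value (@Ex_step_expect _ (fun a t =>
  Ex P (fun w => pol_reward pi (r w) s) * (p_mean s a t * Ex P (fun w => V w t)))).
- by rewrite /step_expect big_distrr; apply: eq_bigr => a _; rewrite -big_distrr mulrCA.
- by move=> t; exact: bdd_measM (bdd_meas_reward s) (bdd_meas_value t).
- by move=> a t; under eq_Ex do rewrite mulrCA; rewrite Ex_reward_p_value Ex_p_value.
Qed.

Lemma Ex_step_var_value s :
  Ex P (fun w => step_var pi (p w) (V w) s) =
  step_expect pi p_mean (fun t => Ex P (fun w => V w t ^+ 2)) s -
  Ex P (fun w => step_expect pi (p w) (V w) s ^+ 2).
Proof.
rewrite /step_var ExB -?Ex_next_valueX //.
  by apply: bdd_meas_step_expect => t; exact: bdd_measX (bdd_meas_value t).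
by apply: bdd_measX; exact: bdd_meas_step_expect bdd_meas_value.
Qed.

Lemma value_bellman w s :
  V w s = pol_reward pi (r w) s + gamma * step_expect pi (p w) (V w) s.
Proof.
rewrite (value_finE _ _ _ (@p_rank w)) (value_fin_bellman _ _ _ (@p_rank w)).
congr (_ + gamma * step_expect _ _ _ _).
by apply: funext => t; rewrite (value_finE _ _ _ (@p_rank w)).
Qed.

Lemma Ex_value s :
  Ex P (fun w => V w s) = Ex P (fun w => pol_reward pi (r w) s) +
  gamma * Ex P (fun w => step_expect pi (p w) (V w) s).
Proof.
have bR := bdd_meas_reward s; have bX := bdd_meas_step_expect s bdd_meas_value.
under eq_Ex do rewrite value_bellman.
by rewrite ExD ?ExZ //; exact: bdd_measM (bdd_meas_cst _) bX.
Qed.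

Lemma Ex_value_sq s :
  Ex P (fun w => V w s ^+ 2) = Ex P (fun w => pol_reward pi (r w) s ^+ 2) +
  2 * gamma * (Ex P (fun w => pol_reward pi (r w) s) *
               Ex P (fun w => step_expect pi (p w) (V w) s)) +
  gamma ^+ 2 * Ex P (fun w => step_expect pi (p w) (V w) s ^+ 2).
Proof.
rewrite -Ex_reward_next.
have bR := bdd_meas_reward s; have bX := bdd_meas_step_expect s bdd_meas_value.
rewrite (@eq_Ex _ _ _ _ _ (fun w => pol_reward pi (r w) s ^+ 2 +
  (2 * gamma * (pol_reward pi (r w) s * step_expect pi (p w) (V w) s) +
   gamma ^+ 2 * step_expect pi (p w) (V w) s ^+ 2))); last first.
  by move=> w; rewrite value_bellman; ring.
rewrite !ExD ?ExZ //; first ring.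
all: by do ?[apply: bdd_measD | apply: bdd_measM | apply: bdd_measX | exact: bdd_meas_cst].
Qed.

Lemma variance_value_recursion s :
  Ex P (fun w => V w s ^+ 2) - Ex P (fun w => V w s) ^+ 2 =
  Ex P (fun w => pol_reward pi (r w) s ^+ 2) - Ex P (fun w => pol_reward pi (r w) s) ^+ 2
  + gamma ^+ 2 * (step_var pi p_mean (fun t => Ex P (fun w => V w t)) s
                  - Ex P (fun w => step_var pi (p w) (V w) s))
  + gamma ^+ 2 * \sum_(a : A) \sum_(t : S) pi s a * p_mean s a t *
      (Ex P (fun w => V w t ^+ 2) - Ex P (fun w => V w t) ^+ 2).
Proof.
rewrite step_expectE step_expectB Ex_step_var_value /step_var -Ex_next_value.
by rewrite Ex_value_sq Ex_value; ring.
Qed.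

Lemma posterior_variance s :
  ('V_P[fun w => V w s] =
   'V_P[fun w => pol_reward pi (r w) s]
   + (gamma ^+ 2)%:E *
       ((step_var pi (fun s a t => fine 'E_P[fun w => p w s a t])
                     (fun t => fine 'E_P[fun w => V w t]) s)%:E
        - 'E_P[fun w => step_var pi (p w) (V w) s])
   + (gamma ^+ 2)%:E * \sum_(a : A) \sum_(t : S)
       (pi s a * fine 'E_P[fun w => p w s a t])%:E * 'V_P[fun w => V w t])%E.
Proof.
have bV2 t : bdd_meas (fun w => V w t ^+ 2) by exact: bdd_measX (bdd_meas_value t).
have bvar : bdd_meas (fun w => step_var pi (p w) (V w) s).
  apply: bdd_measB; first exact: bdd_meas_step_expect s bV2.
  by apply: bdd_measX; exact: bdd_meas_step_expect s bdd_meas_value.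
have pbarE : (fun s a t => fine 'E_P[fun w => p w s a t]) = p_mean.
  apply: funext => s0; apply: funext => a; apply: funext => t.
  by rewrite expectation_Ex //; exact: bdd_meas_p.
have VbarE : (fun t => fine 'E_P[fun w => V w t]) = (fun t => Ex P (fun w => V w t)).
  by apply: funext => t; rewrite expectation_Ex //; exact: bdd_meas_value.
rewrite pbarE VbarE !variance_Ex ?expectation_Ex //;
  [|exact: bdd_meas_reward | exact: bdd_meas_value].
under eq_bigr do under eq_bigr do
  rewrite (expectation_Ex P (bdd_meas_p _ _ _)) (variance_Ex P (bdd_meas_value _)) -EFinM.
under eq_bigr do rewrite sumEFin.
by rewrite sumEFin -!EFinM -!EFinD variance_value_recursion.
Qed.

End posterior_variance.

Unset Implicit Arguments. Set Strict Implicit.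

Theorem theorem3 (R : realType) (S A : finType)
  (d : measure_display) (Omega : measurableType d) (P : probability Omega R)
  (gamma : R) (pi : S -> A -> R)
  (p : Omega -> S -> A -> S -> R) (r : Omega -> S -> A -> R) :
  0 <= gamma < 1 ->
  (forall s a, 0 <= pi s a) -> (forall s, \sum_(a : A) pi s a = 1) ->
  (* p(.|s,a) is a (sub-)probability vector; missing mass = episode end *)
  (forall w s a s', 0 <= p w s a s') ->
  (forall w s a, \sum_(s' : S) p w s a s' <= 1) ->
  (forall s a s', measurable_fun setT (fun w => p w s a s')) ->
  (forall s a, measurable_fun setT (fun w => r w s a)) ->
  (exists M : R, forall w s a, `|r w s a| <= M) ->
  (* (A1),(A3),(A4): independence *)
  indep_blocks P p r ->
  (* (A2): the MDP is a DAG (fixed topological order) *)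
  (exists rank : S -> nat,
      forall w s a s', p w s a s' != 0 -> (rank s < rank s')%N) ->
  let V := fun w => value gamma pi (p w) (r w) in
  let pbar := fun s a s' => fine ('E_P[fun w => p w s a s'])%E in
  let Vbar := fun s => fine ('E_P[fun w => V w s])%E in
  let U := fun s => ('V_P[fun w => V w s])%E in
  let u := fun s =>
    ((step_var pi pbar Vbar s)%:E
       - 'E_P[fun w => step_var pi (p w) (V w) s])%E in
  forall s : S,
    U s = ('V_P[fun w => pol_reward pi (r w) s]
           + (gamma ^+ 2)%:E * u s
           + (gamma ^+ 2)%:E *
               \sum_(a : A) \sum_(s' : S) (pi s a * pbar s a s')%:E * U s')%E.
Proof.
move=> _ _ _ p_ge0 p_sum_le1 mp mr [M r_bound] p_r_indep [rank p_rank] V pbar Vbar U u s.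
exact: (posterior_variance gamma pi p_ge0 p_sum_le1 mp mr r_bound p_r_indep p_rank s).
Qed.
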